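(* Consider the control-affine system $\dot{x}(t) = f(x(t)) + g(x(t))u(t) + d(t)$ on $t \ge 0$, with $x(t)\in\mathbb{R}^n$, $u(t)\in\mathbb{R}^m$, $f,g$ continuously differentiable, and $d(t)\in\mathbb{R}^n$ the (unknown) disturbance. Let $\phi_t:\mathbb{R}^{nM}\to\mathbb{R}^{n\times p}$ be a representation map, $z(t)$ the time-delay embedding of past states, and $\theta^*\in\mathbb{R}^{p}$ a constant parameter such that $$d(t) = \phi_t(z(t))\theta^* + \gamma(t),$$ where $t\mapsto \phi_t(z(t))\theta^*$ is differentiable and the learning residual $\gamma$ is differentiable with $\|\gamma(t)\|\le\bar\gamma$ and $\|\dot\gamma(t)\|\le \bar d_\gamma$ for all $t\ge 0$, for positive constants $\bar\gamma,\bar d_\gamma$. Let $L\in\mathbb{R}^{n\times n}$ be symmetric positive definite, set $d_{model}(t)=\phi_t(z(t))\theta^*$, and define the estimator $$\dot{\xi} = -L\big(\xi + d_{model} + Lx + f(x) + g(x)u\big),\qquad \hat d = d_{model} + Lx + \xi,$$ with arbitrary initial condition $\xi(0)\in\mathbb{R}^n$. Then the disturbance estimation error $\tilde d = \hat d - d$ satisfies $$\|\tilde d(t)\| \le e^{-\lambda_{\min}(L)t}\|\tilde d(0)\| + \frac{\bar d_\gamma}{\lambda_{\min}(L)}\big(1-e^{-\lambda_{\min}(L)t}\big)\quad\text{for all } t\ge0,$$ i.e. $\tilde d$ converges exponentially to the ball $\{\|\tilde d\|\le \bar d_\gamma/\lambda_{\min}(L)\}$, whose radius depends only on $L$ and $\bar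 d_\gamma$ (and not on $\bar\gamma$).
   Context: $\lambda_{\min}(L)$ denotes the smallest eigenvalue of $L$. The time-delay embedding is $z=[x(t),x(t-\tau),\dots,x(t-M\tau)]$ (a finite window of past states); only the differentiability in time of $\phi_t(z(t))\theta^*$ is used. The auxiliary variable $\xi$ is introduced so that the state derivative $\dot x$ is not needed. All signals are assumed to be absolutely continuous / differentiable as required so that the estimator ODE has a solution. *)

From HB Require Import structures.
From mathcomp Require Import all_boot all_order all_algebra.
From mathcomp Require Import all_classical all_reals all_analysis.
Set Implicit Arguments. Unset Strict Implicit. Unset Printing Implicit Defensive.
Import Order.TTheory GRing.Theory Num.Theory.
Import numFieldNormedType.Exports.
Local Open Scope ring_scope.

Definition vnorm (R : realType) (n : nat) (v : 'cV[R]_n) : R :=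
  Num.sqrt (\sum_(i < n) v i 0 ^+ 2).

Definition sym_posdef (R : realType) (n : nat) (L : 'M[R]_n) : Prop :=
  L^T = L /\ forall v : 'cV[R]_n, v != 0 -> 0 < (v^T *m L *m v) 0 0.

Definition is_lambda_min (R : realType) (n : nat) (L : 'M[R]_n) (lam : R) : Prop :=
  eigenvalue L lam /\ forall mu : R, eigenvalue L mu -> lam <= mu.

(* Time-delay embedding with M blocks: z(t) = [x(t); x(t-tau); ...; x(t-(M-1)tau)],
   stored as an n x M matrix (column k = x(t - k tau)) and flattened into R^(nM). *)
Definition delay_embed (R : realType) (n M : nat) (tau : R)
  (x : R -> 'cV[R]_n) (t : R) : 'cV[R]_(n * M) :=
  (mxvec (\matrix_(i < n, k < M) x (t - k%:R * tau) i 0))^T.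

(* The model term [phi_t(z(t)) theta] enters both the estimate and the disturbance,
   so it cancels: for [t >= 0] the error is [L x + xi - gamma], and the dynamics of
   [x] and [xi] turn into [dtil' = - L dtil - gamma'].  As [lambda_min(L)] is the best
   Rayleigh constant of the symmetric matrix [L], this gives
   [(|dtil|^2)' <= - 2 lam |dtil|^2 + 2 dgbar |dtil|], and a comparison argument with
   the scalar equation [y' = - lam y + dgbar] yields the bound. *)

From HB Require Import structures.
From mathcomp Require Import all_boot all_order all_algebra.
From mathcomp Require Import all_classical all_reals all_analysis.
From mathcomp Require Import ring lra.
Import Order.TTheory GRing.Theory Num.Theory.
Import numFieldNormedType.Exports.
Set Implicit Arguments.
Unset Strict Implicit.
Unset Printing Implicit Defensive.
Local Open Scope classical_set_scope.
Local Open Scope ring_scope.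

Section QuadraticForms.
Variables (R : realFieldType) (n : nat).
Implicit Types (u v w : 'cV[R]_n) (A B : 'M[R]_n).

Definition sqnorm v : R := \sum_(i < n) v i 0 ^+ 2.
Definition qform A u v : R := (u^T *m A *m v) 0 0.

Lemma sqnorm_ge0 v : 0 <= sqnorm v.
Proof. by apply: sumr_ge0 => i _; rewrite sqr_ge0. Qed.

Lemma sqr_coord_le_sqnorm v i : v i 0 ^+ 2 <= sqnorm v.
Proof. by rewrite /sqnorm (bigD1 i) //= lerDl; apply: sumr_ge0 => j _; rewrite sqr_ge0. Qed.

Lemma sqnorm_gt0 v : v != 0 -> 0 < sqnorm v.
Proof.
apply: contraNT; rewrite -leNgt => le_v0; apply/eqP/matrixP => i j.
rewrite (ord1 j) mxE; apply/eqP; rewrite -sqrf_eq0 eq_le sqr_ge0 andbT.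
exact: le_trans (sqr_coord_le_sqnorm v i) le_v0.
Qed.

Lemma qform1 u v : qform 1%:M u v = \sum_(i < n) u i 0 * v i 0.
Proof. by rewrite /qform mulmx1 mxE; apply: eq_bigr => i _; rewrite mxE. Qed.

Lemma qform1_sqnorm v : qform 1%:M v v = sqnorm v.
Proof. by rewrite qform1; apply: eq_bigr => i _; rewrite expr2. Qed.

Lemma qformC A u v : A^T = A -> qform A u v = qform A v u.
Proof.
move=> symA; rewrite /qform.
have -> : (u^T *m A *m v) 0 0 = ((u^T *m A *m v)^T) 0 0 by rewrite [RHS]mxE.
by rewrite !trmx_mul trmxK symA mulmxA.
Qed.

Lemma qformDl A u v w : qform A (u + v) w = qform A u w + qform A v w.
Proof. by rewrite /qform linearD /= !mulmxDl mxE. Qed.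

Lemma qformDr A u v w : qform A u (v + w) = qform A u v + qform A u w.
Proof. by rewrite /qform mulmxDr mxE. Qed.

Lemma qformZl A (s : R) u v : qform A (s *: u) v = s * qform A u v.
Proof. by rewrite /qform linearZ /= -!scalemxAl mxE. Qed.

Lemma qformZr A (s : R) u v : qform A u (s *: v) = s * qform A u v.
Proof. by rewrite /qform -scalemxAr mxE. Qed.

Lemma qform_shift A (mu : R) v : qform (A - mu%:M) v v = qform A v v - mu * sqnorm v.
Proof.
rewrite /qform mulmxBr mulmxBl mxE -qform1_sqnorm /qform.
by rewrite mul_mx_scalar mulmx1 -scalemxAl !mxE.
Qed.

Lemma qform_le_sqnorm A : exists2 K, 0 <= K & forall v, qform A v v <= K * sqnorm v.
Proof.
exists (\sum_i \sum_j `|A i j|); first by do 2!apply: sumr_ge0 => ? _.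
move=> v; have qformE : qform A v v = \sum_i \sum_j v i 0 * A i j * v j 0.
  rewrite /qform mxE exchange_big; apply: eq_bigr => j _.
  by rewrite mxE big_distrl; apply: eq_bigr => i _; rewrite !mxE.
rewrite qformE big_distrl; apply: ler_sum => i _.
rewrite big_distrl; apply: ler_sum => j _.
have vi := sqr_coord_le_sqnorm v i; have vj := sqr_coord_le_sqnorm v j.
rewrite -[v i 0 ^+ 2]real_normK ?num_real // in vi.
rewrite -[v j 0 ^+ 2]real_normK ?num_real // in vj.
apply: le_trans (ler_norm _) _; rewrite !normrM mulrAC mulrC.
apply: ler_wpM2l => //.
have := normr_ge0 (v i 0); have := normr_ge0 (v j 0); nra.
Qed.

Lemma discriminant_le0 (a b c : R) : 0 <= a ->
  (forall s, 0 <= a * s ^+ 2 + 2 * b * s + c) -> b ^+ 2 <= a * c.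
Proof.
move=> a_ge0 nonneg; have [a_gt0|] := ltP 0 a.
  have := nonneg (- b / a).
  have -> : a * (- b / a) ^+ 2 + 2 * b * (- b / a) + c = c - b ^+ 2 / a.
    by field; rewrite gt_eqF.
  by rewrite subr_ge0 ler_pdivrMr // mulrC.
move=> a_le0; have a0 : a = 0 by apply/eqP; rewrite eq_le a_le0 a_ge0.
rewrite {}a0 in nonneg *.
have [-> //|b_neq0] := eqVneq b 0; first by rewrite expr0n mul0r.
have := nonneg (- (c + 1) / (2 * b)).
have -> : 2 * b * (- (c + 1) / (2 * b)) = - (c + 1) by field.
lra.
Qed.

Lemma cauchy_schwarz_psd B u v : B^T = B -> (forall w, 0 <= qform B w w) ->
  qform B u v ^+ 2 <= qform B v v * qform B u u.
Proof.
move=> symB psdB; apply: discriminant_le0 => // s.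
have := psdB (u + s *: v).
rewrite qformDl !qformDr !qformZl !qformZr (qformC v u symB).
lra.
Qed.

Lemma psd_unit_sqnorm_le B : B^T = B -> (forall w, 0 <= qform B w w) ->
  B \in unitmx -> exists2 K, 0 < K & forall v, sqnorm v <= K * qform B v v.
Proof.
move=> symB psdB unitB.
have [KB KB_ge0 leKB] := qform_le_sqnorm B.
have [KI KI_ge0 leKI] := qform_le_sqnorm ((invmx B)^T *m invmx B).
exists ((1 + KI) * (1 + KB)); first by apply: mulr_gt0; apply: ltr_pwDl.
(* With [y = B v]: [|v|^2 = |B^-1 y|^2 <= KI |y|^2], and Cauchy-Schwarz for [B]
   gives [|y|^4 = (y^T B v)^2 <= q (y^T B y) <= q KB |y|^2] where [q = v^T B v]. *)
move=> v; set y := B *m v.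
have vE : sqnorm v = qform ((invmx B)^T *m invmx B) y y.
  by rewrite -qform1_sqnorm /qform mulmx1 -{1 2}(mulKmx unitB v) trmx_mul !mulmxA.
have yE : sqnorm y = qform B y v by rewrite -qform1_sqnorm /qform mulmx1 -mulmxA.
have cs := cauchy_schwarz_psd y v symB psdB; rewrite -yE in cs.
have := leKB y; have := leKI y; rewrite -vE.
have := psdB v; have := sqnorm_ge0 y.
set q := qform B v v in cs *; set N := sqnorm y in cs *.
move=> N_ge0 q_ge0 le_vN le_Nq.
have le_Nq' : N <= KB * q.
  have [->|N_neq0] := eqVneq N 0; first by rewrite mulr_ge0.
  have N_gt0 : 0 < N by rewrite lt_def N_neq0.
  rewrite -(ler_pM2l N_gt0) -expr2; apply: le_trans cs _.
  by rewrite mulrC; have := ler_wpM2l q_ge0 le_Nq; nra.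
have := ler_wpM2l KI_ge0 le_Nq'; have := mulr_ge0 KI_ge0 KB_ge0; nra.
Qed.

End QuadraticForms.

Section EuclideanBounds.
Variables (R : realType) (n : nat).
Implicit Types (v : 'cV[R]_n) (A : 'M[R]_n).

Lemma eigenvalue_qform A a : eigenvalue A a ->
  exists2 v, v != 0 & qform A v v = a * sqnorm v.
Proof.
move=> /eigenvalueP [w wA w_neq0]; exists w^T; first by rewrite trmx_eq0.
by rewrite -qform1_sqnorm /qform trmxK wA mulmx1 -scalemxAl mxE.
Qed.

(* The largest [mu] with [mu |v|^2 <= v^T A v] is an eigenvalue: otherwise
   [A - mu] would be positive semidefinite and invertible, hence bounded below
   by a positive multiple of the identity, and [mu] could be increased. *)
Lemma lambda_min_rayleigh A lam : sym_posdef A -> is_lambda_min A lam ->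
  0 < lam /\ forall v, lam * sqnorm v <= qform A v v.
Proof.
move=> [symA pdA] [eig_lam min_lam].
have psdA v : 0 <= qform A v v.
  have [->|v_neq0] := eqVneq v 0; last exact/ltW/pdA.
  by rewrite /qform mulmx0 mxE.
have [v0 v0_neq0 v0E] := eigenvalue_qform eig_lam.
have v0_gt0 := sqnorm_gt0 v0_neq0.
have lam_gt0 : 0 < lam.
  by have := pdA _ v0_neq0; rewrite -/(qform A v0 v0) v0E pmulr_lgt0.
split => //.
pose S := [set a : R | forall v, a * sqnorm v <= qform A v v].
have supS : has_sup S.
  split; first by exists 0 => v; rewrite mul0r.
  by exists lam => a Sa; have := Sa v0; rewrite v0E ler_pM2r.
set mu := sup S.
have Smu : S mu.
  move=> v; apply/ler_addgt0Pr => e e_gt0.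
  have v1_gt0 : 0 < sqnorm v + 1 by apply: ltr_wpDl (sqnorm_ge0 v) _.
  have [a Sa lt_a] := sup_adherent (divr_gt0 e_gt0 v1_gt0) supS.
  have := Sa v; rewrite -/mu in lt_a * => le_a.
  have le_e : e / (sqnorm v + 1) * sqnorm v <= e.
    by rewrite mulrAC ler_pdivrMr // ler_pM2l // lerDl.
  have := ler_wpM2r (sqnorm_ge0 v) (ltW lt_a); rewrite mulrBl; lra.
have eig_mu : eigenvalue A mu.
  apply: contraT => not_eig.
  have unitB : A - mu%:M \in unitmx.
    rewrite -row_free_unit -kermx_eq0.
    by move: not_eig; rewrite /eigenvalue /eigenspace negbK.
  have symB : (A - mu%:M)^T = A - mu%:M by rewrite linearB /= tr_scalar_mx symA.
  have psdB v : 0 <= qform (A - mu%:M) v v by rewrite qform_shift subr_ge0.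
  have [K K_gt0 leK] := psd_unit_sqnorm_le symB psdB unitB.
  have : S (mu + K^-1).
    move=> v; have := leK v; rewrite qform_shift mulrDl -ler_pdivrMl // mulrC.
    lra.
  move/(sup_upper_bound supS); rewrite -/mu.
  have : 0 < K^-1 by rewrite invr_gt0.
  lra.
by move=> v; apply: le_trans (Smu v); rewrite ler_wpM2r ?sqnorm_ge0 ?min_lam.
Qed.

Lemma qform1_le_vnorm u v : `|qform 1%:M u v| <= vnorm u * vnorm v.
Proof.
have psd1 (w : 'cV[R]_n) : 0 <= qform 1%:M w w by rewrite qform1_sqnorm sqnorm_ge0.
have cs := cauchy_schwarz_psd u v (trmx1 _ _) psd1.
rewrite !qform1_sqnorm mulrC in cs.
by rewrite -sqrtr_sqr /vnorm -sqrtrM ?sqnorm_ge0 // ler_wsqrtr.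
Qed.

End EuclideanBounds.

Section Coordinates.
Variable R : realFieldType.

Lemma is_derive_mxP a b (F : R -> 'M[R]_(a, b)) (t : R) (D : 'M[R]_(a, b)) :
  is_derive t 1 F D <-> forall i j, is_derive t 1 (fun s => F s i j) (D i j).
Proof.
split=> [[dF DF] i j|dF].
  apply: DeriveDef; first by move/derivable_mxP : dF; apply.
  by rewrite derive_mx // in DF; rewrite -DF mxE.
have derF : derivable F t 1.
  by apply/derivable_mxP => i j; exact: (@ex_derive _ _ _ _ _ _ _ (dF i j)).
apply: DeriveDef => //; rewrite derive_mx //; apply/matrixP => i j.
by rewrite mxE (@derive_val _ _ _ _ _ _ _ (dF i j)).
Qed.

Lemma is_derive_mulmxl a b c (A : 'M[R]_(a, b)) (F : R -> 'M[R]_(b, c)) (t : R) D :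
  is_derive t 1 F D -> is_derive t 1 (fun s => A *m F s) (A *m D).
Proof.
move/is_derive_mxP => dF; apply/is_derive_mxP => i j.
have -> : (fun s => (A *m F s) i j) = \sum_k (fun s => A i k * F s k j).
  by apply/funext => s; rewrite fct_sumE mxE.
by rewrite mxE; exact: is_derive_sum (fun k => is_deriveZ (A i k) (dF k j)).
Qed.

Lemma cvg_coord a b (F : R -> 'M[R]_(a, b)) (G : set_system R) {FG : Filter G}
    (l : 'M[R]_(a, b)) i j :
  F @ G --> l -> (fun s => F s i j) @ G --> l i j.
Proof.
have coord_cont : {for l, continuous (fun N : 'M[R]_(a, b) => N i j)}.
  exact/differentiable_continuous/differentiable_coord.
exact: continuous_cvg coord_cont.
Qed.

Lemma cvg_sum_ord k (G : set_system R) {FG : Filter G} (h : 'I_k -> R -> R)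
    (l : 'I_k -> R) :
  (forall i, h i @ G --> l i) -> (\sum_(i < k) h i) @ G --> \sum_(i < k) l i.
Proof.
elim: k h l => [|k IHk] h l hl; first by rewrite !big_ord0; exact: cvg_cst.
by rewrite !big_ord_recr /=; apply: cvgD; [apply: IHk => i|]; exact: hl.
Qed.

Lemma cvg_mulmx_coord a b c (A : 'M[R]_(a, b)) (F : R -> 'M[R]_(b, c))
    (G : set_system R) {FG : Filter G} (l : 'M[R]_(b, c)) i j :
  F @ G --> l -> (fun s => (A *m F s) i j) @ G --> (A *m l) i j.
Proof.
move=> cvgF; have -> : (fun s => (A *m F s) i j) = \sum_k (fun s => A i k * F s k j).
  by apply/funext => s; rewrite fct_sumE mxE.
by rewrite mxE; apply: cvg_sum_ord => k; apply: cvgMl_tmp; exact: cvg_coord.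
Qed.

Lemma is_derive_sqnorm n (E : R -> 'cV[R]_n) (t : R) (D : 'cV[R]_n) :
  is_derive t 1 E D -> is_derive t 1 (fun s => sqnorm (E s)) (2 * qform 1%:M (E t) D).
Proof.
move=> dE; have -> : (fun s => sqnorm (E s)) = \sum_i (fun s => E s i 0) ^+ 2.
  by apply/funext => s; rewrite fct_sumE.
have dEi i := is_deriveX 2 ((is_derive_mxP _ _ _).1 dE i 0).
apply: is_derive_eq (is_derive_sum dEi) _.
by rewrite qform1 mulr_sumr; apply: eq_bigr => i _; rewrite /GRing.scale /=; ring.
Qed.

Lemma cvg_sqnorm n (E : R -> 'cV[R]_n) (G : set_system R) {FG : Filter G}
    (l : 'cV[R]_n) :
  (forall i, (fun s => E s i 0) @ G --> l i 0) ->
  (fun s => sqnorm (E s)) @ G --> sqnorm l.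
Proof.
move=> cvgE; have -> : (fun s => sqnorm (E s)) = \sum_i (fun s => E s i 0 ^+ 2).
  by apply/funext => s; rewrite fct_sumE.
by apply: cvg_sum_ord => i; rewrite expr2; apply: cvgM; exact: cvgE.
Qed.

End Coordinates.

Arguments cvg_coord {R a b F G FG l} i j.
Arguments cvg_mulmx_coord {R a b c} A {F G FG l} i j.

Section Comparison.
Variable R : realType.
Implicit Types (f h dh S dS N dN : R -> R) (s T : R).

Lemma is_derive1_continuous f s (df : R) : is_derive s 1 f df -> {for s, continuous f}.
Proof.
move=> f_df; apply: differentiable_continuous; rewrite -derivable1_diffP.
exact: (@ex_derive _ _ _ _ _ _ _ f_df).
Qed.

Lemma derive_le0_le_at0 h dh :
  (forall s, 0 < s -> is_derive s 1 h (dh s)) -> (forall s, 0 < s -> dh s <= 0) ->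
  h @ at_right 0 --> h 0 -> forall T, 0 <= T -> h T <= h 0.
Proof.
move=> h_dh dh_le0 h0 T T_ge0.
have pos_in s : s \in `]0, +oo[ -> 0 < s by rewrite in_itv /= andbT.
apply: (ler0_derive1_nincry (a := 0)) => //.
- by move=> s /pos_in s_gt0; exact: (@ex_derive _ _ _ _ _ _ _ (h_dh s s_gt0)).
- move=> s /pos_in s_gt0.
  by rewrite derive1E (@derive_val _ _ _ _ _ _ _ (h_dh s s_gt0)) dh_le0.
- apply/continuous_within_itvcyP; split => // s /pos_in s_gt0.
  exact: is_derive1_continuous (h_dh s s_gt0).
Qed.

Lemma is_derive_expR_scale (a s : R) :
  is_derive s 1 (fun r => expR (a * r)) (expR (a * s) * a).
Proof.
have := is_derive1_comp (is_derive_expR (a * s)) (is_deriveZ a (is_derive_id s 1)).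
by rewrite /GRing.scale /= mulr1.
Qed.

(* Comparison with the solution of [y' = - a y + c]: [expR (a s) * (S s - c / a)]
   is nonincreasing. *)
Lemma expR_comparison S dS (a c : R) : 0 < a ->
  (forall s, 0 < s -> is_derive s 1 S (dS s)) ->
  (forall s, 0 < s -> dS s <= - a * S s + c) ->
  S @ at_right 0 --> S 0 ->
  forall T, 0 <= T -> S T <= expR (- a * T) * S 0 + c / a * (1 - expR (- a * T)).
Proof.
move=> a_gt0 S_dS dS_le S0 T T_ge0.
pose h s := expR (a * s) * (S s - c / a).
have h_dh s : 0 < s -> is_derive s 1 h (expR (a * s) * (a * S s + dS s - c)).
  move=> s_gt0; apply: is_derive_eq.
    exact: is_deriveM (is_derive_expR_scale a s) (is_deriveB (S_dS s s_gt0) _).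
  by rewrite /GRing.scale /= !fctE subr0; field; rewrite gt_eqF.
have dh_le0 s : 0 < s -> expR (a * s) * (a * S s + dS s - c) <= 0.
  move=> s_gt0; rewrite pmulr_rle0 ?expR_gt0 //; have := dS_le s s_gt0; lra.
have h0 : h @ at_right 0 --> h 0.
  apply: cvgM; last exact: cvgB S0 (cvg_cst _).
  exact: cvg_at_right_filter (is_derive1_continuous (is_derive_expR_scale a 0)).
have := derive_le0_le_at0 h_dh dh_le0 h0 T_ge0.
rewrite /h mulr0 expR0 mul1r -ler_pdivlMl ?expR_gt0 // -expRN -[- (a * T)]mulNr.
have := expR_ge0 (- a * T); lra.
Qed.

(* [sqrt (N + del^2)] is differentiable and satisfies the linear differential
   inequality with [c] replaced by [c + a del]; then let [del] go to [0]. *)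
Lemma sqrt_comparison N dN (a c : R) : 0 < a -> 0 <= c ->
  (forall s, 0 <= N s) ->
  (forall s, 0 < s -> is_derive s 1 N (dN s)) ->
  (forall s, 0 < s -> dN s <= 2 * (- a * N s + c * Num.sqrt (N s))) ->
  N @ at_right 0 --> N 0 ->
  forall T, 0 <= T ->
  Num.sqrt (N T) <= expR (- a * T) * Num.sqrt (N 0) + c / a * (1 - expR (- a * T)).
Proof.
move=> a_gt0 c_ge0 N_ge0 N_dN dN_le N0 T T_ge0.
apply/ler_addgt0Pr => del del_gt0.
pose S s := Num.sqrt (N s + del ^+ 2).
have Ndel_gt0 s : 0 < N s + del ^+ 2 by apply: ltr_wpDl (N_ge0 s) (exprn_gt0 _ _).
have S_gt0 s : 0 < S s by rewrite sqrtr_gt0.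
have S_dS s : 0 < s -> is_derive s 1 S ((2 * S s)^-1 * dN s).
  move=> s_gt0.
  have := @is_derive1_comp _ _ (N + cst (del ^+ 2)) _ _ _ (is_derive1_sqrt (Ndel_gt0 s))
    (is_deriveD (N_dN s s_gt0) (is_derive_cst (del ^+ 2) s 1)).
  by rewrite addr0.
have dS_le s : 0 < s -> (2 * S s)^-1 * dN s <= - a * S s + (c + a * del).
  move=> s_gt0; have := dN_le s s_gt0.
  have r_le_S : Num.sqrt (N s) <= S s by rewrite ler_wsqrtr // lerDl sqr_ge0.
  have del_le_S : del <= S s.
    by rewrite -[del]gtr0_norm // -sqrtr_sqr ler_wsqrtr // lerDr.
  have SE : S s ^+ 2 = N s + del ^+ 2 by rewrite sqr_sqrtr // ltW.
  rewrite invfM mulrAC ler_pdivrMr // mulrC ler_pdivrMl //.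
  have : 0 <= c * (S s - Num.sqrt (N s)) by rewrite mulr_ge0 // subr_ge0.
  have : 0 <= a * del * (S s - del) by rewrite !mulr_ge0 ?subr_ge0 // ltW.
  nra.
have S0 : S @ at_right 0 --> S 0.
  exact: continuous_cvg (@sqrt_continuous R _) (cvgD N0 (cvg_cst _)).
have := expR_comparison a_gt0 S_dS dS_le S0 T_ge0.
have -> : (c + a * del) / a = c / a + del by field; rewrite gt_eqF.
have r_le_S : Num.sqrt (N T) <= S T by rewrite ler_wsqrtr // lerDl sqr_ge0.
have S0_le : S 0 <= Num.sqrt (N 0) + del.
  rewrite -[X in _ <= X]gtr0_norm ?ltr_wpDl ?sqrtr_ge0 //.
  rewrite -sqrtr_sqr ler_wsqrtr // sqrrD sqr_sqrtr //.
  by rewrite lerD2r lerDl mulrn_wge0 // mulr_ge0 ?sqrtr_ge0 ?ltW.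
have e_ge0 := expR_ge0 (- a * T).
have e_le1 : expR (- a * T) <= 1 by rewrite expR_le1 mulNr oppr_le0 mulr_ge0 // ltW.
have := ler_wpM2l e_ge0 S0_le; nra.
Qed.

End Comparison.

Lemma perturbed_linear_error_bound (R : realType) (n : nat) (A : 'M[R]_n) (lam c : R)
    (E w : R -> 'cV[R]_n) :
  0 < lam -> 0 <= c -> (forall v, lam * sqnorm v <= qform A v v) ->
  (forall s : R, 0 < s -> is_derive s 1 E (- (A *m E s) - w s)) ->
  (forall s : R, 0 < s -> vnorm (w s) <= c) ->
  (forall i, (fun s => E s i 0) @ at_right 0 --> E 0 i 0) ->
  forall t : R, 0 <= t ->
  vnorm (E t) <= expR (- lam * t) * vnorm (E 0) + c / lam * (1 - expR (- lam * t)).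
Proof.
move=> lam_gt0 c_ge0 rayleigh dE w_le cvgE.
apply: (sqrt_comparison lam_gt0 c_ge0 (fun s => sqnorm_ge0 (E s))).
- by move=> s s_gt0; exact: is_derive_sqnorm (dE s s_gt0).
- move=> s s_gt0; rewrite ler_pM2l //.
  have -> : qform 1%:M (E s) (- (A *m E s) - w s)
            = - qform A (E s) (E s) - qform 1%:M (E s) (w s).
    by rewrite /qform !mulmx1 mulmxBr mulmxN !mulmxA !mxE.
  have := rayleigh (E s); have := qform1_le_vnorm (E s) (w s).
  have := ler_wpM2l (sqrtr_ge0 (sqnorm (E s))) (w_le s s_gt0).
  have := ler_norm (- qform 1%:M (E s) (w s)); rewrite normrN /vnorm; lra.
- exact: cvg_sqnorm.
Qed.

Theorem theorem1 (R : realType) (n m p M : nat)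
  (f : 'cV[R]_n -> 'cV[R]_n) (g : 'cV[R]_n -> 'M[R]_(n, m))
  (x : R -> 'cV[R]_n) (u : R -> 'cV[R]_m) (d : R -> 'cV[R]_n)
  (tau : R) (phi : R -> 'cV[R]_(n * M) -> 'M[R]_(n, p)) (theta : 'cV[R]_p)
  (gamma dgamma : R -> 'cV[R]_n) (gbar dgbar : R)
  (L : 'M[R]_n) (lam : R) (xi : R -> 'cV[R]_n) :
  (forall y : 'cV[R]_n, differentiable f y) ->
  (forall v : 'cV[R]_n, continuous (fun y => 'D_v f y)) ->
  (forall y : 'cV[R]_n, differentiable g y) ->
  (forall v : 'cV[R]_n, continuous (fun y => 'D_v g y)) ->
  (forall t : R, 0 < t -> is_derive t 1 x (f (x t) + g (x t) *m u t + d t)) ->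
  x @ at_right 0 --> x 0 ->
  0 < tau ->
  (forall t : R, 0 <= t ->
     d t = phi t (delay_embed M tau x t) *m theta + gamma t) ->
  (forall t : R, 0 < t ->
     derivable (fun s : R => phi s (delay_embed M tau x s) *m theta) t 1) ->
  0 < gbar -> 0 < dgbar ->
  (forall t : R, 0 < t -> is_derive t 1 gamma (dgamma t)) ->
  gamma @ at_right 0 --> gamma 0 ->
  (forall t : R, 0 <= t -> vnorm (gamma t) <= gbar) ->
  (forall t : R, 0 < t -> vnorm (dgamma t) <= dgbar) ->
  sym_posdef L -> is_lambda_min L lam ->
  (forall t : R, 0 < t -> is_derive t 1 xi
     (- (L *m (xi t + phi t (delay_embed M tau x t) *m theta + L *m x t
               + f (x t) + g (x t) *m u t)))) ->
  xi @ at_right 0 --> xi 0 ->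
  let dhat := fun t => phi t (delay_embed M tau x t) *m theta + L *m x t + xi t in
  let dtil := fun t => dhat t - d t in
  forall t : R, 0 <= t ->
    vnorm (dtil t) <= expR (- lam * t) * vnorm (dtil 0)
                      + dgbar / lam * (1 - expR (- lam * t)).
Proof.
move=> _ _ _ _ dx x0 _ d_split _ _ dgbar_gt0 dgam gamma0 _ dgam_le L_pd L_lam dxi xi0.
move=> dhat dtil t t_ge0.
have [lam_gt0 rayleigh] := lambda_min_rayleigh L_pd L_lam.
pose E s := L *m x s + xi s - gamma s.
have dtilE s : 0 <= s -> dtil s = E s.
  by move=> s_ge0; rewrite /dtil /dhat d_split // /E; apply/matrixP => i j; rewrite !mxE; ring.
rewrite !dtilE //.
have dE (s : R) : 0 < s -> is_derive s 1 E (- (L *m E s) - dgamma s).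
  move=> s_gt0; apply: is_derive_eq.
    apply: is_deriveB (dgam s s_gt0).
    exact: is_deriveD (is_derive_mulmxl L (dx s s_gt0)) (dxi s s_gt0).
  rewrite d_split ?ltW // -mulmxBr -mulmxN /E.
  congr (L *m _ - _).
  (* abstracting the matrix products keeps [mxE] and [ring] from expanding them *)
  set a := f (x s); set b := g (x s) *m u s; set c := phi s _ *m theta.
  set y := L *m x s.
  by apply/matrixP => i j; rewrite !mxE; ring.
have cvgE i : (fun s => E s i 0) @ at_right 0 --> E 0 i 0.
  have -> : (fun s => E s i 0) = fun s => (L *m x s) i 0 + xi s i 0 - gamma s i 0.
    by apply/funext => s; rewrite !mxE.
  have -> : E 0 i 0 = (L *m x 0) i 0 + xi 0 i 0 - gamma 0 i 0 by rewrite !mxE.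
  exact: cvgB (cvgD (cvg_mulmx_coord L i 0 x0) (cvg_coord i 0 xi0)) (cvg_coord i 0 gamma0).
exact: perturbed_linear_error_bound lam_gt0 (ltW dgbar_gt0) rayleigh dE dgam_le cvgE
  t t_ge0.
Qed.
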